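(* Let $(\mathbb{T},G)$ be a minimal equicontinuous topological dynamical system, $\theta_0\in\mathbb{T}$, and $f$ a $K$-valued semicocycle over $(\mathbb{T},G,\theta_0)$. Let $[\theta]$ denote the $\sim$-class of $\theta$ and equip $\mathbb{T}/\!\sim$ with the induced action $g[\theta]=[g\theta]$. Then $(\mathbb{T}/\!\sim,G,[\theta_0])$ is a pointed minimal equicontinuous system, the map $\tilde f\colon G[\theta_0]\to K$, $g[\theta_0]\mapsto f(g\theta_0)$, is a well-defined $K$-valued semicocycle over $(\mathbb{T}/\!\sim,G,[\theta_0])$ which is invariant under no rotation, and $X_{\tilde f}=X_f$. In particular, $(X_f,G)$ is a semicocycle extension of $(\mathbb{T}/\!\sim,G)$.
   Context: $G$ is a topological group acting jointly continuously on a compact Hausdorff space; minimal means all orbits dense; equicontinuous means the family of translations is equicontinuous. $E(\mathbb{T})$ is the Ellis semigroup (closure of $\{\theta\mapsto g\theta\}$ in $\mathbb{T}^{\mathbb{T}}$, pointwise topology). $K$ is compact Hausdorff. A pointed system $(\mathbb{T},G,\theta_0)$ has $\overline{G\theta_0}=\mathbb{T}$; a $K$-valued semicocycle over it is a continuous $f\colon G\theta_0\to K$. $F=\overline{\operatorname{gr} f}\subseteq\mathbb{T}\times K$, $F(\theta)=\{k:(\theta,k)\in F\}$. Relation: $\theta_1\sim\theta_2$ iff $F(\xi\theta_1)=F(\xi\theta_2)$ for all $\xi\in E(\mathbb{T})$ (the analogous relation is defined for $\tilde f$ over $\mathbb{T}/\!\sim$ using $E(\mathbb{T}/\!\sim)$);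 $f$ is invariant under no rotation if $\sim$ is the identity. $G$ acts on $K^G$ (product topology) by $\sigma^h((x_g)_{g\in G})=(x_{gh})_{g\in G}$. Identifying $f$ with $(f(g\theta_0))_{g\in G}\in K^G$, $X_f$ is the closure of $\{\sigma^h f:h\in G\}$ in $K^G$, and $(X_f,G)$ carries the shift action. If $(\mathbb{T},G)$ is minimal equicontinuous and $f$ is invariant under no rotation, $(X_f,G)$ is called a semicocycle extension of $(\mathbb{T},G)$. *)

From Stdlib Require Import List.
Import ListNotations.

Set Implicit Arguments.

Definition topology (X : Type) := (X -> Prop) -> Prop.

Definition is_topology (X : Type) (t : topology X) : Prop :=
  t (fun _ => True) /\
  (forall U V, t U -> t V -> t (fun x => U x /\ V x)) /\
  (forall C : (X -> Prop) -> Prop, (forall U, C U -> t U) ->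
     t (fun x => exists U, C U /\ U x)).

Definition prod_top (A B : Type) (tA : topology A) (tB : topology B)
  : topology (A * B) :=
  fun W => forall p, W p -> exists U V, tA U /\ tB V /\ U (fst p) /\ V (snd p) /\
             forall a b, U a -> V b -> W (a, b).

Definition continuous (A B : Type) (tA : topology A) (tB : topology B)
  (f : A -> B) : Prop :=
  forall V, tB V -> tA (fun x => V (f x)).

Definition compact (X : Type) (t : topology X) : Prop :=
  forall C : (X -> Prop) -> Prop,
    (forall U, C U -> t U) -> (forall x, exists U, C U /\ U x) ->
    exists l : list (X -> Prop),
      (forall U, In U l -> C U) /\ (forall x, exists U, In U l /\ U x).

Definition hausdorff (X : Type) (t : topology X) : Prop :=
  forall x y, x <> y -> exists U V, t U /\ t V /\ U x /\ V y /\
    (forall z, U z -> V z -> False).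

Definition closure (X : Type) (t : topology X) (A : X -> Prop) : X -> Prop :=
  fun x => forall U, t U -> U x -> exists y, U y /\ A y.

Definition dense (X : Type) (t : topology X) (A : X -> Prop) : Prop :=
  forall x, closure t A x.

Definition is_topgroup (G : Type) (tG : topology G)
  (e : G) (mul : G -> G -> G) (inv : G -> G) : Prop :=
  is_topology tG /\
  (forall a b c, mul a (mul b c) = mul (mul a b) c) /\
  (forall a, mul e a = a) /\ (forall a, mul a e = a) /\
  (forall a, mul (inv a) a = e) /\ (forall a, mul a (inv a) = e) /\
  continuous (prod_top tG tG) tG (fun p => mul (fst p) (snd p)) /\
  continuous tG tG inv.

Definition is_action (G T : Type) (e : G) (mul : G -> G -> G)
  (act : G -> T -> T) : Prop :=
  (forall x, act e x = x) /\
  (forall g h x, act (mul g h) x = act g (act h x)).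

Definition is_tds (G T : Type) (tG : topology G) (e : G) (mul : G -> G -> G)
  (tT : topology T) (act : G -> T -> T) : Prop :=
  is_topology tT /\ compact tT /\ hausdorff tT /\ is_action e mul act /\
  continuous (prod_top tG tT) tT (fun p => act (fst p) (snd p)).

Definition orbit (G T : Type) (act : G -> T -> T) (x : T) : T -> Prop :=
  fun y => exists g, y = act g x.

Definition minimal (G T : Type) (tT : topology T) (act : G -> T -> T) : Prop :=
  forall x, dense tT (orbit act x).

(* entourages of the (unique) uniformity of a compact Hausdorff space:
   neighbourhoods of the diagonal *)
Definition entourage (T : Type) (tT : topology T) (E : T * T -> Prop) : Prop :=
  exists W, prod_top tT tT W /\ (forall x, W (x, x)) /\ (forall p, W p -> E p).

Definition equicontinuous (G T : Type) (tT : topology T) (act : G -> T -> T)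
  : Prop :=
  forall V, entourage tT V -> exists U, entourage tT U /\
    forall g x y, U (x, y) -> V (act g x, act g y).

(* Ellis semigroup: closure of {theta |-> g theta} in T^T, pointwise topology
   (membership tested on basic open sets of the product topology) *)
Definition ellis (G T : Type) (tT : topology T) (act : G -> T -> T)
  (xi : T -> T) : Prop :=
  forall l : list (T * (T -> Prop)),
    (forall p, In p l -> tT (snd p) /\ snd p (xi (fst p))) ->
    exists g, forall p, In p l -> snd p (act g (fst p)).

Definition pointed (G T : Type) (tT : topology T) (act : G -> T -> T)
  (theta0 : T) : Prop :=
  dense tT (orbit act theta0).

(* f is continuous on the orbit G theta0 (subspace topology); only the values
   of f on G theta0 are relevant. *)
Definition semicocycle (G T K : Type) (tT : topology T) (tK : topology K)
  (act : G -> T -> T) (theta0 : T) (f : T -> K) : Prop :=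
  pointed tT act theta0 /\
  forall V, tK V -> exists U, tT U /\
    forall y, orbit act theta0 y -> (V (f y) <-> U y).

Definition Fgraph (G T K : Type) (tT : topology T) (tK : topology K)
  (act : G -> T -> T) (theta0 : T) (f : T -> K) : T * K -> Prop :=
  closure (prod_top tT tK) (fun p => orbit act theta0 (fst p) /\ snd p = f (fst p)).

Definition sim (G T K : Type) (tT : topology T) (tK : topology K)
  (act : G -> T -> T) (theta0 : T) (f : T -> K) (t1 t2 : T) : Prop :=
  forall xi, ellis tT act xi -> forall k,
    Fgraph tT tK act theta0 f (xi t1, k) <-> Fgraph tT tK act theta0 f (xi t2, k).

Definition no_rotation (G T K : Type) (tT : topology T) (tK : topology K)
  (act : G -> T -> T) (theta0 : T) (f : T -> K) : Prop :=
  forall t1 t2, sim tT tK act theta0 f t1 t2 -> t1 = t2.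

(* X_f : closure in K^G (product topology) of {sigma^h f : h in G}, where
   f is identified with (f (g theta0))_g and sigma^h x = (x_{gh})_g *)
Definition Xf (G T K : Type) (mul : G -> G -> G) (tK : topology K)
  (act : G -> T -> T) (theta0 : T) (f : T -> K) : (G -> K) -> Prop :=
  fun x => forall l : list (G * (K -> Prop)),
    (forall p, In p l -> tK (snd p) /\ snd p (x (fst p))) ->
    exists h, forall p, In p l -> snd p (f (act (mul (fst p) h) theta0)).

Definition semicocycle_extension (G T K : Type) (tG : topology G) (e : G)
  (mul : G -> G -> G) (tT : topology T) (act : G -> T -> T) (tK : topology K)
  (X : (G -> K) -> Prop) : Prop :=
  is_tds tG e mul tT act /\ minimal tT act /\ equicontinuous tT act /\
  exists (theta0 : T) (f : T -> K),
    semicocycle tT tK act theta0 f /\ no_rotation tT tK act theta0 f /\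
    (forall x, X x <-> Xf mul tK act theta0 f x).

Definition quot (T : Type) (R : T -> T -> Prop) : Type :=
  { S : T -> Prop | exists x, S = R x }.

Definition cls (T : Type) (R : T -> T -> Prop) (x : T) : quot R :=
  exist _ (R x) (ex_intro _ x eq_refl).

Definition quot_top (T : Type) (tT : topology T) (R : T -> T -> Prop)
  : topology (quot R) :=
  fun U => tT (fun x => U (cls R x)).

Arguments cls {T} R x.
Arguments quot_top {T} tT R _.

(* The proof proceeds as follows.
   1. Elementary facts on topologies, compactness, regularity of compact
      Hausdorff spaces and their (diagonal-neighbourhood) entourages.
   2. In a minimal equicontinuous system the translations are totally
      bounded; with a Baire-type argument on finitely many orbit pieces this
      yields [near_identity_orbit_closure]: every point is, locally, a limit
      of g a with g uniformly close to the identity.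
   3. F is a nonempty, upper semicontinuous, closed-graph multifunction that
      equals {f θ} on the orbit of θ0.
   4. ~ is an Ellis-invariant equivalence; distinct classes are separated by
      saturated open sets and saturations of open sets are open.
   5. Hence T/~ is compact Hausdorff, G acts jointly continuously, minimally
      and equicontinuously, f descends to a semicocycle f~ with the same
      graph, which has no rotations, and X_{f~} = X_f since f~ and f agree
      along the orbits. *)

From Stdlib Require Import List Classical ClassicalEpsilon FunctionalExtensionality PropExtensionality ProofIrrelevance.
Import ListNotations.

Lemma pred_ext {X : Type} (P Q : X -> Prop) : (forall x, P x <-> Q x) -> P = Q.
Proof.
  intros H; apply functional_extensionality; intros; apply propositional_extensionality; auto.
Qed.

Section Topology.
Variables (X : Type) (t : topology X).
Hypothesis Ht : is_topology t.

Lemma open_ext (S S' : X -> Prop) : t S -> (forall x, S x <-> S' x) -> t S'.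
Proof. intros H E; rewrite <- (pred_ext _ _ E); exact H. Qed.

Lemma open_local (S : X -> Prop) :
  (forall x, S x -> exists U, t U /\ U x /\ forall y, U y -> S y) -> t S.
Proof.
  intros H. destruct Ht as [_ [_ Hunion]].
  eapply open_ext; [apply (Hunion (fun U => t U /\ forall y, U y -> S y) (fun U HU => proj1 HU))|].
  intros x; split.
  - intros [U [[_ HU] Ux]]; auto.
  - intros Sx. destruct (H x Sx) as [U [tU [Ux HU]]]. exists U; auto.
Qed.

Lemma open_True : t (fun _ => True).
Proof. apply Ht. Qed.

Lemma open_False : t (fun _ => False).
Proof. apply open_local. intros x []. Qed.

Lemma open_inter U V : t U -> t V -> t (fun x => U x /\ V x).
Proof. apply Ht. Qed.

Lemma open_finter (I : Type) (li : list I) (O : I -> X -> Prop) :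
  (forall i, In i li -> t (O i)) -> t (fun x => forall i, In i li -> O i x).
Proof.
  induction li as [|a li IH]; intros H.
  - eapply open_ext; [apply open_True|]. intros x; split; auto. intros _ i [].
  - eapply open_ext; [apply (open_inter (O a) (fun x => forall i, In i li -> O i x))|].
    + apply H; simpl; auto.
    + apply IH; intros; apply H; simpl; auto.
    + intros x; split.
      * intros [H1 H2] i [<-|Hi]; auto.
      * intros H1; split; [apply H1; simpl; auto|intros; apply H1; simpl; auto].
Qed.

Lemma open_fex (I : Type) (P : I -> Prop) (O : I -> X -> Prop) :
  (forall i, P i -> t (O i)) -> t (fun x => exists i, P i /\ O i x).
Proof.
  intros H; apply open_local. intros x [i [Pi Oi]]. exists (O i); split; auto.
  split; auto. intros y Oy; exists i; auto.
Qed.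

Lemma closure_closed (S : X -> Prop) : t (fun x => ~ closure t S x).
Proof.
  apply open_local. intros x Hx. unfold closure in Hx.
  apply not_all_ex_not in Hx. destruct Hx as [U HU].
  exists U. destruct (classic (t U)) as [tU|]; [|exfalso; apply HU; intros; contradiction].
  destruct (classic (U x)) as [Ux|]; [|exfalso; apply HU; intros; contradiction].
  split; [auto|split; [auto|]]. intros y Uy Hy. apply HU; intros _ _. apply Hy; auto.
Qed.

Lemma finite_index_list (I : Type) (P : I -> Prop) (O : I -> X -> Prop) (Z : X -> Prop)
  (l : list (X -> Prop)) :
  (forall U, In U l -> (exists i, P i /\ U = O i) \/ U = Z) ->
  exists li, (forall i, In i li -> P i) /\
    forall U, In U l -> U = Z \/ exists i, In i li /\ U = O i.
Proof.
  induction l as [|U l IH]; intros H.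
  - exists nil; split; [intros i []|intros U []].
  - destruct IH as [li [H1 H2]]; [intros; apply H; simpl; auto|].
    destruct (H U (or_introl eq_refl)) as [[i [Pi ->]]| ->].
    + exists (i :: li); split.
      * intros j [<-|Hj]; auto.
      * intros V [<-|HV]; [right; exists i; simpl; auto|].
        destruct (H2 V HV) as [?|[j [Hj ->]]]; auto. right; exists j; simpl; auto.
    + exists li; split; auto. intros V [<-|HV]; auto.
Qed.

Lemma nowhere_dense_list (Ss : list (X -> Prop)) :
  (forall S, In S Ss -> forall O, t O -> (exists x, O x) -> exists x, O x /\ ~ closure t S x) ->
  forall O, t O -> (exists x, O x) -> exists x, O x /\ forall S, In S Ss -> ~ closure t S x.
Proof.
  induction Ss as [|S Ss IH]; intros H O tO [x Ox].
  - exists x; split; auto.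
  - destruct (H S (or_introl eq_refl) O tO (ex_intro _ x Ox)) as [y [Oy Hy]].
    destruct (IH (fun S' HS' => H S' (or_intror HS')) (fun z => O z /\ ~ closure t S z))
      as [z [[Oz Hz] Hz2]].
    + apply open_inter; [auto|apply closure_closed].
    + eauto.
    + exists z; split; auto. intros S' [<-|HS']; auto.
Qed.

Lemma dense_finite_union (Ss : list (X -> Prop)) (x0 : X) :
  dense t (fun y => exists S, In S Ss /\ S y) ->
  exists S, In S Ss /\ exists O, t O /\ (exists x, O x) /\ forall y, O y -> closure t S y.
Proof.
  intros Hdense. apply NNPP; intros Hno.
  destruct (nowhere_dense_list Ss) with (O := fun _ : X => True) as [x [_ Hx]].
  - intros S HS O tO Oex. apply NNPP; intros Hn. apply Hno. exists S; split; auto.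
    exists O; split; auto; split; auto.
    intros y Oy. apply NNPP; intros Hy. apply Hn. exists y; auto.
  - apply open_True.
  - exists x0; auto.
  - destruct (Hdense x (fun y => forall S, In S Ss -> ~ closure t S y)) as [y [Hy [S [HS Sy]]]].
    + apply open_finter; intros; apply closure_closed.
    + exact Hx.
    + apply (Hy S HS). intros U _ Uy; exists y; auto.
Qed.

Hypothesis Hc : compact t.

Lemma compact_closed_subcover (I : Type) (P : I -> Prop) (O : I -> X -> Prop) (C : X -> Prop) :
  t (fun x => ~ C x) -> (forall i, P i -> t (O i)) ->
  (forall x, C x -> exists i, P i /\ O i x) ->
  exists li, (forall i, In i li -> P i) /\ forall x, C x -> exists i, In i li /\ O i x.
Proof.
  intros HC HO Hcov.
  destruct (Hc (fun U => (exists i, P i /\ U = O i) \/ U = (fun x => ~ C x))) as [l [Hl1 Hl2]].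
  - intros U [[i [Pi ->]]| ->]; auto.
  - intros x. destruct (classic (C x)) as [Cx|nCx].
    + destruct (Hcov x Cx) as [i [Pi Oi]]. exists (O i); split; auto. left; eauto.
    + exists (fun x => ~ C x); split; auto.
  - destruct (finite_index_list I P O _ l Hl1) as [li [H1 H2]]. exists li; split; auto.
    intros x Cx. destruct (Hl2 x) as [U [HU Ux]].
    destruct (H2 U HU) as [->|[i [Hi ->]]]; [contradiction|eauto].
Qed.

Lemma compact_subcover (I : Type) (P : I -> Prop) (O : I -> X -> Prop) :
  (forall i, P i -> t (O i)) ->
  (forall x, exists i, P i /\ O i x) ->
  exists li, (forall i, In i li -> P i) /\ forall x, exists i, In i li /\ O i x.
Proof.
  intros HO Hcov.
  destruct (compact_closed_subcover I P O (fun _ => True)) as [li [H1 H2]]; auto.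
  - eapply open_ext; [apply open_False|]. intros; tauto.
  - exists li; split; auto.
Qed.

Hypothesis Hh : hausdorff t.

Lemma compact_regular x N : t N -> N x ->
  exists M Q, t M /\ t Q /\ M x /\ (forall y, ~ N y -> Q y) /\ (forall y, M y -> Q y -> False).
Proof.
  intros tN Nx.
  destruct (compact_closed_subcover ((X -> Prop) * (X -> Prop))
     (fun i => t (fst i) /\ t (snd i) /\ fst i x /\ forall z, fst i z -> snd i z -> False)
     snd (fun y => ~ N y)) as [li [H1 H2]].
  - eapply open_ext; [exact tN|]. intros; tauto.
  - intros i Hi; apply Hi.
  - intros c nNc. assert (x <> c) by (intros ->; contradiction).
    destruct (Hh x c H) as [U [V [tU [tV [Ux [Vc D]]]]]].
    exists (U, V); simpl; auto.
  - exists (fun y => forall i, In i li -> fst i y), (fun y => exists i, In i li /\ snd i y).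
    split; [apply open_finter; intros i Hi; apply (H1 i Hi)|].
    split; [apply open_fex; intros i Hi; apply (H1 i Hi)|].
    split; [intros i Hi; apply (H1 i Hi)|].
    split; [exact H2|].
    intros y HM [i [Hi Hy]]. apply (proj2 (proj2 (proj2 (H1 i Hi))) y); auto.
Qed.

Lemma hausdorff_point_closed x : t (fun y => y <> x).
Proof.
  apply open_local. intros y Hy. destruct (Hh y x Hy) as [U [V [tU [tV [Uy [Vx D]]]]]].
  exists U; split; auto; split; auto. intros z Uz ->. eauto.
Qed.

End Topology.

Section Product.
Variables (A B : Type) (tA : topology A) (tB : topology B).
Hypothesis (HA : is_topology tA) (HB : is_topology tB).

Lemma prod_top_is_topology : is_topology (prod_top tA tB).
Proof.
  split; [|split].
  - intros p _. exists (fun _ => True), (fun _ => True).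
    repeat split; auto; apply open_True; auto.
  - intros U V HU HV p [Up Vp].
    destruct (HU p Up) as [U1 [V1 [h1 [h2 [h3 [h4 h5]]]]]].
    destruct (HV p Vp) as [U2 [V2 [k1 [k2 [k3 [k4 k5]]]]]].
    exists (fun a => U1 a /\ U2 a), (fun b => V1 b /\ V2 b).
    repeat split; auto; try (apply open_inter; auto); intuition.
  - intros C HC p [U [CU Up]]. destruct (HC U CU p Up) as [U1 [V1 [h1 [h2 [h3 [h4 h5]]]]]].
    exists U1, V1; repeat split; auto. intros a b Ha Hb; exists U; auto.
Qed.

End Product.

Lemma box_open (A B : Type) (tA : topology A) (tB : topology B) U V :
  tA U -> tB V -> prod_top tA tB (fun p => U (fst p) /\ V (snd p)).
Proof. intros HU HV p [Up Vp]. exists U, V; repeat split; auto. Qed.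

Lemma prod_swap (A B : Type) (tA : topology A) (tB : topology B) W :
  prod_top tA tB W -> prod_top tB tA (fun p => W (snd p, fst p)).
Proof.
  intros H p Wp. destruct (H (snd p, fst p) Wp) as [U [V [h1 [h2 [h3 [h4 h5]]]]]].
  exists V, U; repeat split; auto.
Qed.

Lemma prod_pull (A B A' B' : Type) (tA : topology A) (tB : topology B)
  (tA' : topology A') (tB' : topology B') (phi : A -> A') (psi : B -> B') W :
  continuous tA tA' phi -> continuous tB tB' psi ->
  prod_top tA' tB' W -> prod_top tA tB (fun p => W (phi (fst p), psi (snd p))).
Proof.
  intros Hp Hq H p Wp. destruct (H _ Wp) as [U [V [h1 [h2 [h3 [h4 h5]]]]]].
  exists (fun a => U (phi a)), (fun b => V (psi b)); repeat split; auto.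
Qed.

Section Entourages.
Variables (X : Type) (t : topology X).
Hypothesis (Ht : is_topology t) (Hc : compact t) (Hh : hausdorff t).

Lemma ent_diag E x : entourage t E -> E (x, x).
Proof. intros [W [_ [HW HE]]]; auto. Qed.

Lemma ent_nbhd E x : entourage t E ->
  exists N, t N /\ N x /\ forall y z, N y -> N z -> E (y, z).
Proof.
  intros [W [HW [Hd HE]]]. destruct (HW (x, x) (Hd x)) as [U [V [h1 [h2 [h3 [h4 h5]]]]]].
  exists (fun y => U y /\ V y); split; [apply open_inter; auto|]. simpl in *.
  split; auto. intros y z [? ?] [? ?]; apply HE; apply h5; auto.
Qed.

Lemma ent_sym E : entourage t E ->
  exists E', entourage t E' /\ (forall p, E' p -> E p) /\ forall a b, E' (a, b) -> E' (b, a).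
Proof.
  intros [W [HW [Hd HE]]]. exists (fun p => W p /\ W (snd p, fst p)). split; [|split].
  - exists (fun p => W p /\ W (snd p, fst p)); split; [|split].
    + apply prod_top_is_topology; auto. apply prod_swap; auto.
    + intros x; split; auto.
    + auto.
  - intros p [Hp _]; auto.
  - intros a b [H1 H2]; split; auto.
Qed.

Lemma ent_point x N : t N -> N x -> exists E, entourage t E /\ forall y, E (x, y) -> N y.
Proof.
  intros tN Nx.
  exists (fun p => (N (fst p) /\ N (snd p)) \/ (fst p <> x /\ snd p <> x)). split.
  - exists (fun p => (N (fst p) /\ N (snd p)) \/ (fst p <> x /\ snd p <> x)).
    repeat split; auto.
    + intros p [Hp|Hp].
      * exists N, N; repeat split; try tauto; intros; left; auto.
      * exists (fun y => y <> x), (fun y => y <> x); repeat split; try tauto;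
          try (apply hausdorff_point_closed; auto); intros; right; auto.
    + intros y. destruct (classic (N y)); [left|right]; simpl; split; auto;
        intros ->; contradiction.
  - intros y [[_ Hy]|[H _]]; auto. simpl in H; contradiction.
Qed.

(* A finite cover of X by
   regular pairs (M ⊂ closure M ⊂ N, N E-small) provides V. *)
Lemma ent_comp E : entourage t E ->
  exists V, entourage t V /\ forall a b c, V (a, b) -> V (b, c) -> E (a, c).
Proof.
  intros [W0 [HW0 [Hd0 HE0]]].
  assert (HW0e : entourage t W0) by (exists W0; auto).
  destruct (compact_subcover X t Ht Hc ((X -> Prop) * (X -> Prop) * (X -> Prop))
    (fun i => let '(N, M, Q) := i in t N /\ t M /\ t Q /\
       (forall y z, N y -> N z -> W0 (y, z)) /\ (forall y, ~ N y -> Q y) /\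
       (forall y, M y -> Q y -> False))
    (fun i => let '(N, M, Q) := i in M)) as [li [H1 H2]].
  - intros [[N M] Q] Hi; apply Hi.
  - intros x. destruct (ent_nbhd W0 x HW0e) as [N [tN [Nx HN]]].
    destruct (compact_regular X t Ht Hc Hh x N tN Nx) as [M [Q [tM [tQ [Mx [HQ D]]]]]].
    exists (N, M, Q); repeat split; auto.
  - set (V := fun p => forall i, In i li -> let '(N, M, Q) := i in
       (N (fst p) /\ N (snd p)) \/ (Q (fst p) /\ Q (snd p))).
    exists V. split.
    + exists V. repeat split; auto.
      * apply (open_finter _ _ (prod_top_is_topology _ _ _ _ Ht Ht) _ li
          (fun i p => let '(N, M, Q) := i in
           (N (fst p) /\ N (snd p)) \/ (Q (fst p) /\ Q (snd p)))).
        intros [[N M] Q] Hi. destruct (H1 _ Hi) as [tN [tM [tQ _]]].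
        intros p [Hp|Hp].
        -- exists N, N; repeat split; try tauto; intros; left; auto.
        -- exists Q, Q; repeat split; try tauto; intros; right; auto.
      * intros x [[N M] Q] Hi. destruct (H1 _ Hi) as [tN [tM [tQ [_ [HQ _]]]]].
        simpl. destruct (classic (N x)); [left|right]; auto.
    + intros a b c Hab Hbc. destruct (H2 b) as [[[N M] Q] [Hi Mb]].
      destruct (H1 _ Hi) as [tN [tM [tQ [HN [HQ D]]]]].
      specialize (Hab _ Hi); specialize (Hbc _ Hi). simpl in *.
      apply HE0, HN; [destruct Hab as [[? ?]|[? ?]]|destruct Hbc as [[? ?]|[? ?]]];
        auto; exfalso; eauto.
Qed.

Lemma ent_third E : entourage t E ->
  exists V, entourage t V /\ (forall a b, V (a, b) -> V (b, a)) /\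
    forall a b c d, V (a, b) -> V (b, c) -> V (c, d) -> E (a, d).
Proof.
  intros HE. destruct (ent_comp E HE) as [V2 [HV2 C2]].
  destruct (ent_comp V2 HV2) as [V3 [HV3 C3]].
  destruct (ent_sym V3 HV3) as [V [HV [HVs Hsym]]].
  exists V; split; auto; split; auto. intros a b c d Hab Hbc Hcd.
  apply (C2 a c d); [apply (C3 a b c); auto|].
  apply (C3 c d d); auto. apply HVs. apply (ent_diag V d HV).
Qed.

Lemma ent_half E : entourage t E ->
  exists V, entourage t V /\ (forall a b, V (a, b) -> V (b, a)) /\
    forall a b c, V (a, b) -> V (b, c) -> E (a, c).
Proof.
  intros HE. destruct (ent_third E HE) as [V [HV [Hs C]]].
  exists V; split; auto; split; auto. intros a b c H1 H2. apply (C a b c c); auto.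
  apply (ent_diag V c HV).
Qed.

Lemma ent_small_cover E : entourage t E -> exists ds : list (X -> Prop),
  (forall x, exists D, In D ds /\ D x) /\ forall D, In D ds -> forall y z, D y -> D z -> E (y, z).
Proof.
  intros HE.
  destruct (compact_subcover X t Ht Hc (X -> Prop)
    (fun D => t D /\ forall y z, D y -> D z -> E (y, z)) (fun D => D)) as [li [H1 H2]].
  - intros D HD; apply HD.
  - intros x. destruct (ent_nbhd E x HE) as [N [tN [Nx HN]]]. exists N; auto.
  - exists li; split; auto. intros D HD; apply H1; auto.
Qed.

Lemma ent_finite_net E : entourage t E ->
  exists ts : list X, forall x, exists s, In s ts /\ E (s, x).
Proof.
  intros HE.
  destruct (compact_subcover X t Ht Hc (X * (X -> Prop))
    (fun p => t (snd p) /\ snd p (fst p) /\ forall y z, snd p y -> snd p z -> E (y, z))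
    snd) as [li [H1 H2]].
  - intros p Hp; apply Hp.
  - intros x. destruct (ent_nbhd E x HE) as [N [tN [Nx HN]]]. exists (x, N); auto.
  - exists (map fst li). intros x. destruct (H2 x) as [p [Hp Nx]].
    exists (fst p); split; [apply in_map; auto|].
    destruct (H1 p Hp) as [_ [Hf HE']]; apply HE'; auto.
Qed.

End Entourages.

Section System.
Variables (G : Type) (tG : topology G) (e : G) (mul : G -> G -> G) (inv : G -> G)
  (T : Type) (tT : topology T) (act : G -> T -> T).
Hypothesis HG : is_topgroup tG e mul inv.
Hypothesis Htds : is_tds tG e mul tT act.
Hypothesis Hmin : minimal tT act.
Hypothesis Heq : equicontinuous tT act.

Lemma T_topology : is_topology tT. Proof. apply Htds. Qed.
Lemma T_compact : compact tT. Proof. apply Htds. Qed.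
Lemma T_hausdorff : hausdorff tT. Proof. apply Htds. Qed.
Lemma G_topology : is_topology tG. Proof. apply HG. Qed.

Lemma act_e x : act e x = x. Proof. apply Htds. Qed.
Lemma act_mul g h x : act (mul g h) x = act g (act h x). Proof. apply Htds. Qed.

Lemma act_inv g x : act (inv g) (act g x) = x.
Proof. rewrite <- act_mul. destruct HG as [_ [_ [_ [_ [H _]]]]]. rewrite H. apply act_e. Qed.

Lemma act_inv' g x : act g (act (inv g) x) = x.
Proof. rewrite <- act_mul. destruct HG as [_ [_ [_ [_ [_ [H _]]]]]]. rewrite H. apply act_e. Qed.

Lemma mul_inv_cancel g h : mul g (mul (inv g) h) = h.
Proof. destruct HG as [_ [Ha [Hl [_ [_ [Hr _]]]]]]. rewrite Ha, Hr, Hl; auto. Qed.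

Lemma act_cont g : continuous tT tT (act g).
Proof.
  intros V HV. apply open_local; [apply T_topology|]. intros x Vx.
  destruct Htds as [_ [_ [_ [_ Hj]]]].
  destruct (Hj V HV (g, x) Vx) as [A [B [h1 [h2 [h3 [h4 h5]]]]]].
  exists B; repeat split; auto. intros y By. apply (h5 g y); auto.
Qed.

Lemma orbit_cont x : continuous tG tT (fun g => act g x).
Proof.
  intros V HV. apply open_local; [apply G_topology|]. intros g Vx.
  destruct Htds as [_ [_ [_ [_ Hj]]]].
  destruct (Hj V HV (g, x) Vx) as [A [B [h1 [h2 [h3 [h4 h5]]]]]].
  exists A; repeat split; auto. intros h Ah. apply (h5 h x); auto.
Qed.

Lemma open_pre g V : tT V -> tT (fun y => V (act g y)).
Proof. intros; apply act_cont; auto. Qed.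

Lemma ellis_act g : ellis tT act (act g).
Proof. intros l Hl. exists g; intros p Hp; apply Hl; auto. Qed.

Lemma ellis_id : ellis tT act (fun x => x).
Proof. intros l Hl. exists e; intros p Hp; rewrite act_e; apply Hl; auto. Qed.

Lemma ellis_comp xi xi' : ellis tT act xi -> ellis tT act xi' ->
  ellis tT act (fun x => xi' (xi x)).
Proof.
  intros H1 H2 l Hl.
  destruct (H2 (map (fun p => (xi (fst p), snd p)) l)) as [h Hh].
  { intros p Hp. apply in_map_iff in Hp. destruct Hp as [q [<- Hq]]. simpl. apply Hl; auto. }
  destruct (H1 (map (fun p => (fst p, fun s => snd p (act h s))) l)) as [g Hg].
  { intros p Hp. apply in_map_iff in Hp. destruct Hp as [q [<- Hq]]. simpl. split.
    - apply open_pre. apply Hl; auto.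
    - specialize (Hh (xi (fst q), snd q)). simpl in Hh. apply Hh.
      apply in_map_iff; exists q; auto. }
  exists (mul h g). intros p Hp. rewrite act_mul.
  specialize (Hg (fst p, fun s => snd p (act h s))). apply Hg.
  apply in_map_iff; exists p; auto.
Qed.

Definition entT : (T * T -> Prop) -> Prop := entourage tT.

Lemma finite_codes (ds : list (T -> Prop)) (Hds : forall x, exists D, In D ds /\ D x) :
  forall ts (P : G -> Prop), exists gs, (forall g', In g' gs -> P g') /\
    forall g, P g -> exists g', In g' gs /\
      forall ti, In ti ts -> exists D, In D ds /\ D (act g ti) /\ D (act g' ti).
Proof.
  induction ts as [|t0 ts IH]; intros P.
  - destruct (classic (exists g, P g)) as [[g Pg]|nP].
    + exists [g]; split; [intros g' [<-|[]]; auto|]. intros g1 _. exists g; split; simpl; auto.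
      intros _ [].
    + exists []; split; [intros _ []|]. intros g Pg; exfalso; eauto.
  - assert (Hsub : forall ds', exists gs, (forall g', In g' gs -> P g') /\
      forall D, In D ds' -> forall g, P g -> D (act g t0) -> exists g', In g' gs /\
        D (act g' t0) /\ forall ti, In ti ts ->
          exists D', In D' ds /\ D' (act g ti) /\ D' (act g' ti)).
    { induction ds' as [|D ds' IH2].
      - exists []; split; [intros _ []|intros _ []].
      - destruct IH2 as [gs2 [Hg2 Hc2]].
        destruct (IH (fun g => P g /\ D (act g t0))) as [gs1 [Hg1 Hc1]].
        exists (gs1 ++ gs2); split.
        + intros g' Hg'. apply in_app_or in Hg'. destruct Hg' as [Hg'|Hg']; [apply Hg1; auto|auto].
        + intros D' [<-|HD'] g Pg Dg.
          * destruct (Hc1 g (conj Pg Dg)) as [g' [Hg' Hm]].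
            exists g'; split; [apply in_or_app; auto|]. split; [apply Hg1; auto|auto].
          * destruct (Hc2 D' HD' g Pg Dg) as [g' [Hg' Hm]].
            exists g'; split; [apply in_or_app; auto|auto]. }
    destruct (Hsub ds) as [gs [Hg Hc]]. exists gs; split; auto.
    intros g Pg. destruct (Hds (act g t0)) as [D [HD Dg]].
    destruct (Hc D HD g Pg Dg) as [g' [Hg' [Dg' Hm]]]. exists g'; split; auto.
    intros ti [<-|Hti]; eauto.
Qed.

Lemma translations_totally_bounded V : entT V -> exists gs : list G,
  forall g, exists g', In g' gs /\ forall s, V (act g s, act g' s).
Proof.
  intros HV. destruct (ent_third T tT T_topology T_compact T_hausdorff V HV) as [V' [HV' [Hs C]]].
  destruct (Heq V' HV') as [U' [HU' HU'e]].
  destruct (ent_finite_net T tT T_topology T_compact U' HU') as [ts Hts].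
  destruct (ent_small_cover T tT T_topology T_compact V' HV') as [ds [Hds1 Hds2]].
  destruct (finite_codes ds Hds1 ts (fun _ => True)) as [gs [_ Hgs]].
  exists gs. intros g. destruct (Hgs g I) as [g' [Hg' Hm]]. exists g'; split; auto.
  intros s. destruct (Hts s) as [ti [Hti Hu]].
  destruct (Hm ti Hti) as [D [HD [D1 D2]]].
  apply (C _ (act g ti) (act g' ti) _).
  - apply Hs. apply HU'e; auto.
  - apply (Hds2 D HD); auto.
  - apply HU'e; auto.
Qed.

Lemma translations_near_identity V : entT V -> exists gs : list G,
  forall g, exists gj, In gj gs /\ exists n, (forall s, V (s, act n s)) /\ g = mul gj n.
Proof.
  intros HV. destruct (ent_sym T tT T_topology V HV) as [V' [HV' [HV'V Hs]]].
  destruct (Heq V' HV') as [Ue [HUe HUe']].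
  destruct (translations_totally_bounded Ue HUe) as [gs Hgs].
  exists gs. intros g. destruct (Hgs g) as [gj [Hgj Hc]]. exists gj; split; auto.
  exists (mul (inv gj) g); split; [|rewrite mul_inv_cancel; auto].
  intros s. apply HV'V, Hs. rewrite act_mul. rewrite <- (act_inv gj s) at 2.
  apply HUe'. auto.
Qed.

Lemma near_identity_orbit_closure U a : entT U -> exists A, tT A /\ A a /\
  forall x, A x -> forall N, tT N -> N x ->
    exists g, N (act g a) /\ forall s, U (s, act g s).
Proof.
  intros HU. destruct (ent_half T tT T_topology T_compact T_hausdorff U HU) as [V [HV [Hs CV]]].
  destruct (translations_near_identity V HV) as [gs Hdec].
  set (S := fun gj y => exists n, (forall s, V (s, act n s)) /\ y = act gj (act n a)).
  destruct (dense_finite_union T tT T_topology (map S gs) a) as [S0 [HS0 [O [tO [[x0 Ox0] HO]]]]].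
  { intros x N tN Nx. destruct (Hmin a x N tN Nx) as [y [Ny [g ->]]].
    destruct (Hdec g) as [gj [Hgj [n [Hn ->]]]].
    exists (act (mul gj n) a); split; auto. exists (S gj); split; [apply in_map; auto|].
    exists n; split; auto. apply act_mul. }
  apply in_map_iff in HS0. destruct HS0 as [gj [<- _]].
  destruct (HO x0 Ox0 O tO Ox0) as [y0 [Oy0 [n0 [Hn0 ->]]]].
  exists (fun y => O (act gj (act n0 y))).
  split; [apply (open_pre n0 (fun z => O (act gj z))), open_pre; auto|]. split; auto.
  intros x Ax N tN Nx.
  destruct (HO _ Ax (fun y => N (act (inv n0) (act (inv gj) y)))) as [y [Ny [n [Hn ->]]]].
  - apply (open_pre (inv gj) (fun z => N (act (inv n0) z))), open_pre; auto.
  - rewrite act_inv, act_inv; auto.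
  - exists (mul (inv n0) n). rewrite act_mul. rewrite act_inv in Ny. split; auto.
    intros s. rewrite act_mul. apply (CV s (act n s)); auto.
    apply Hs. pose proof (Hn0 (act (inv n0) (act n s))) as Hq. rewrite act_inv' in Hq. exact Hq.
Qed.

Section Semicocycle.
Variables (K : Type) (tK : topology K) (theta0 : T) (f : T -> K).
Hypothesis HtK : is_topology tK.
Hypothesis HcK : compact tK.
Hypothesis HhK : hausdorff tK.
Hypothesis Hsc : semicocycle tT tK act theta0 f.

Definition F (x : T) (k : K) : Prop := Fgraph tT tK act theta0 f (x, k).

Definition sim_rel : T -> T -> Prop := sim tT tK act theta0 f.
Definition saturated (S : T -> Prop) : Prop := forall z w, S z -> sim_rel z w -> S w.

Lemma f_cont V : tK V ->
  exists U, tT U /\ forall g, (V (f (act g theta0)) <-> U (act g theta0)).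
Proof.
  intros HV. destruct Hsc as [_ H]. destruct (H V HV) as [U [tU HU]].
  exists U; split; auto. intros g; apply HU. exists g; auto.
Qed.

Lemma F_box x k : F x k <-> forall A B, tT A -> tK B -> A x -> B k ->
  exists g, A (act g theta0) /\ B (f (act g theta0)).
Proof.
  split.
  - intros H A B tA tB Ax Bk.
    destruct (H (fun p => A (fst p) /\ B (snd p))) as [p [[Ap Bp] [[g Hg] Hf]]].
    + apply box_open; auto.
    + simpl; auto.
    + exists g. rewrite <- Hg. rewrite <- Hf. auto.
  - intros H W HW Wp. destruct (HW (x, k) Wp) as [A [B [h1 [h2 [h3 [h4 h5]]]]]].
    destruct (H A B h1 h2 h3 h4) as [g [Ag Bg]].
    exists (act g theta0, f (act g theta0)); split; [apply h5; auto|]. simpl; split; auto.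
    exists g; auto.
Qed.

Lemma F_not_box x k : ~ F x k -> exists A B, tT A /\ tK B /\ A x /\ B k /\
  forall g, A (act g theta0) -> B (f (act g theta0)) -> False.
Proof.
  intros H. rewrite F_box in H. apply NNPP; intros H2. apply H.
  intros A B tA tB Ax Bk. apply NNPP; intros H3. apply H2. exists A, B; repeat split; auto.
  intros g H4 H5. apply H3; eauto.
Qed.

Lemma F_orbit g : F (act g theta0) (f (act g theta0)).
Proof. rewrite F_box. intros A B tA tB Ax Bk. exists g; auto. Qed.

Lemma F_orbit_eq g k : F (act g theta0) k -> k = f (act g theta0).
Proof.
  intros H. apply NNPP; intros Hne.
  destruct (HhK _ _ Hne) as [O1 [O2 [t1 [t2 [h1 [h2 D]]]]]].
  destruct (f_cont O2 t2) as [U [tU HU]].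
  rewrite F_box in H. destruct (H U O1 tU t1) as [g' [Ug Og]]; auto.
  - apply HU; auto.
  - apply (D (f (act g' theta0))); auto. apply HU; auto.
Qed.

(* Every fibre is nonempty (compactness of K, minimality of T). *)
Lemma F_nonempty x : exists k, F x k.
Proof.
  apply NNPP; intros H.
  destruct (compact_subcover K tK HtK HcK ((T -> Prop) * (K -> Prop))
    (fun p => tT (fst p) /\ tK (snd p) /\ fst p x /\
       forall g, fst p (act g theta0) -> snd p (f (act g theta0)) -> False) snd) as [li [H1 H2]].
  - intros p Hp; apply Hp.
  - intros k. destruct (F_not_box x k) as [A [B [h1 [h2 [h3 [h4 h5]]]]]].
    + intros Hk; apply H; eauto.
    + exists (A, B); simpl; auto.
  - destruct (Hmin theta0 x (fun y => forall p, In p li -> fst p y)) as [y [Hy [g ->]]].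
    + apply open_finter; [apply T_topology|]. intros p Hp; apply H1; auto.
    + intros p Hp; apply H1; auto.
    + destruct (H2 (f (act g theta0))) as [p [Hp Bp]].
      apply (proj2 (proj2 (proj2 (H1 p Hp))) g); auto.
Qed.

Lemma F_usc V : tK V -> tT (fun x => forall k, F x k -> V k).
Proof.
  intros tV. apply open_local; [apply T_topology|]. intros x Hx.
  destruct (compact_closed_subcover K tK HcK ((T -> Prop) * (K -> Prop))
    (fun p => tT (fst p) /\ tK (snd p) /\ fst p x /\
       forall g, fst p (act g theta0) -> snd p (f (act g theta0)) -> False) snd
    (fun k => ~ V k)) as [li [H1 H2]].
  - eapply open_ext; [exact tV|]. intros; split; [auto|apply NNPP].
  - intros p Hp; apply Hp.
  - intros k Hk. destruct (F_not_box x k) as [A [B [h1 [h2 [h3 [h4 h5]]]]]].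
    + intros Hk'; apply Hk; auto.
    + exists (A, B); simpl; auto.
  - exists (fun y => forall p, In p li -> fst p y). split.
    + apply open_finter; [apply T_topology|]. intros p Hp; apply H1; auto.
    + split; [intros p Hp; apply H1; auto|].
      intros y Hy k Fk. apply NNPP; intros nV. destruct (H2 k nV) as [p [Hp Bk]].
      rewrite F_box in Fk. destruct (Fk (fst p) (snd p)) as [g [Ag Bg]]; auto; try apply H1; auto.
      apply (proj2 (proj2 (proj2 (H1 p Hp))) g); auto.
Qed.

Lemma F_avoids O Q U0 : tK Q -> (forall k, O k -> Q k -> False) -> tT U0 ->
  (forall g, U0 (act g theta0) -> O (f (act g theta0))) ->
  forall u, U0 u -> forall k, F u k -> ~ Q k.
Proof.
  intros tQ D tU HU u Uu k Fk Qk. rewrite F_box in Fk.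
  destruct (Fk U0 Q) as [g [Ug Qg]]; auto. apply (D _ (HU g Ug) Qg).
Qed.

Lemma sim_refl x : sim_rel x x.
Proof. intros xi _ k; tauto. Qed.

Lemma sim_sym x y : sim_rel x y -> sim_rel y x.
Proof. intros H xi Hxi k; symmetry; apply H; auto. Qed.

Lemma sim_trans x y z : sim_rel x y -> sim_rel y z -> sim_rel x z.
Proof. intros H1 H2 xi Hxi k. rewrite (H1 xi Hxi k). apply H2; auto. Qed.

Lemma sim_F x y k : sim_rel x y -> (F x k <-> F y k).
Proof. intros H. apply (H (fun x => x) ellis_id k). Qed.

Lemma sim_ellis xi x y : ellis tT act xi -> sim_rel x y -> sim_rel (xi x) (xi y).
Proof.
  intros Hxi H xi' Hxi' k. apply (H (fun z => xi' (xi z))). apply ellis_comp; auto.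
Qed.

Lemma sim_act g x y : sim_rel x y -> sim_rel (act g x) (act g y).
Proof. apply sim_ellis, ellis_act. Qed.

Lemma ellis_pair_translate xi x y k O U0 N : ellis tT act xi -> F (xi x) k ->
  tK O -> O k -> tT U0 -> (forall g, O (f (act g theta0)) <-> U0 (act g theta0)) ->
  tT N -> N (xi y) -> exists m, U0 (act m x) /\ N (act m y).
Proof.
  intros Hxi Fk tO Ok tU0 HU0 tN Ny.
  destruct (ent_point T tT T_topology T_hausdorff (xi y) N tN Ny) as [E [HE HEN]].
  destruct (ent_half T tT T_topology T_compact T_hausdorff E HE) as [U [HU [Us CU]]].
  destruct (near_identity_orbit_closure U (xi x) HU) as [A0 [tA0 [A0a HA0]]].
  rewrite F_box in Fk. destruct (Fk A0 O tA0 tO A0a Ok) as [g1 [A0c Oc]].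
  destruct (HA0 _ A0c U0 tU0) as [g [U0g Hg]]; [apply HU0; auto|].
  destruct (ent_nbhd T tT T_topology U (act g (xi y)) HU) as [N3 [tN3 [N3b HN3]]].
  destruct (Hxi [(x, fun s => U0 (act g s)); (y, fun s => N3 (act g s))]) as [h Hh].
  { intros p [<-|[<-|[]]]; simpl; split; auto; apply open_pre; auto. }
  exists (mul g h). rewrite !act_mul. split.
  - apply (Hh (x, fun s => U0 (act g s))); simpl; auto.
  - apply HEN. apply (CU (xi y) (act g (xi y))); auto. apply HN3; auto.
    apply (Hh (y, fun s => N3 (act g s))); simpl; auto.
Qed.

(* One half of the separation: if k ∈ F(ξx) but k ∉ F(ξy), then x and y
   lie in disjoint saturated open sets {z | F(mz) ⊆ O1}, {z | F(mz) ⊆ Q1}. *)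
Lemma separation_half xi x y k : ellis tT act xi -> F (xi x) k -> ~ F (xi y) k ->
  exists A B, tT A /\ tT B /\ saturated A /\ saturated B /\ A x /\ B y /\
    forall z, A z -> B z -> False.
Proof.
  intros Hxi Fa nFb.
  destruct (F_not_box _ _ nFb) as [N2 [O [tN2 [tO [N2b [Ok HN2]]]]]].
  destruct (compact_regular K tK HtK HcK HhK k O tO Ok) as [O1 [Q1 [tO1 [tQ1 [O1k [HQ1 D1]]]]]].
  destruct (compact_regular K tK HtK HcK HhK k O1 tO1 O1k) as [O2 [Q2 [tO2 [tQ2 [O2k [HQ2 D2]]]]]].
  destruct (f_cont O2 tO2) as [U0 [tU0 HU0]].
  destruct (ellis_pair_translate xi x y k O2 U0 N2 Hxi Fa tO2 O2k tU0 HU0 tN2 N2b)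
    as [m [Hmx Hmy]].
  exists (fun z => forall k', F (act m z) k' -> O1 k'), (fun z => forall k', F (act m z) k' -> Q1 k').
  split; [apply (open_pre m (fun z => forall k', F z k' -> O1 k')), F_usc; auto|].
  split; [apply (open_pre m (fun z => forall k', F z k' -> Q1 k')), F_usc; auto|].
  split; [intros z w Hz Hzw k' Fk'; apply Hz; apply (sim_F _ _ _ (sim_act m _ _ Hzw)); auto|].
  split; [intros z w Hz Hzw k' Fk'; apply Hz; apply (sim_F _ _ _ (sim_act m _ _ Hzw)); auto|].
  split.
  - intros k' Fk'. apply NNPP; intros nO1.
    apply (F_avoids O2 Q2 U0 tQ2 D2 tU0) with (u := act m x) (k := k'); auto.
    intros g' Hg'. apply HU0; auto.
  - split.
    + intros k' Fk'. apply HQ1. intros Ok'. rewrite F_box in Fk'.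
      destruct (Fk' N2 O tN2 tO Hmy Ok') as [g' [Hg1 Hg2]]. eauto.
    + intros z Hz1 Hz2. destruct (F_nonempty (act m z)) as [k' Fk']. apply (D1 k'); auto.
Qed.

Lemma saturated_separation x y : ~ sim_rel x y ->
  exists A B, tT A /\ tT B /\ saturated A /\ saturated B /\ A x /\ B y /\
    forall z, A z -> B z -> False.
Proof.
  intros H. unfold sim_rel, sim in H. apply not_all_ex_not in H. destruct H as [xi H].
  apply imply_to_and in H. destruct H as [Hxi H]. apply not_all_ex_not in H. destruct H as [k H].
  destruct (classic (F (xi x) k)) as [H1|H1].
  - apply (separation_half xi x y k); auto. intros H2. apply H. split; auto.
  - destruct (separation_half xi y x k Hxi) as [A [B [h1 [h2 [h3 [h4 [h5 [h6 h7]]]]]]]].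
    + apply NNPP; intros H2. apply H. split; intros; contradiction.
    + auto.
    + exists B, A; repeat split; auto. intros z Hz1 Hz2; eauto.
Qed.

Lemma saturated_separation_closed C z : tT (fun x => ~ C x) -> (forall c, C c -> ~ sim_rel c z) ->
  exists B, tT B /\ saturated B /\ B z /\ forall w, B w -> C w -> False.
Proof.
  intros tC HC.
  destruct (compact_closed_subcover T tT T_compact ((T -> Prop) * (T -> Prop))
    (fun p => tT (fst p) /\ tT (snd p) /\ saturated (snd p) /\ snd p z /\
      forall w, fst p w -> snd p w -> False) fst C) as [li [H1 H2]]; auto.
  - intros p Hp; apply Hp.
  - intros c Cc. destruct (saturated_separation c z (HC c Cc))
      as [A [B [h1 [h2 [h3 [h4 [h5 [h6 h7]]]]]]]].
    exists (A, B); simpl; repeat split; auto.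
  - exists (fun w => forall p, In p li -> snd p w). split.
    + apply open_finter; [apply T_topology|]. intros p Hp; apply H1; auto.
    + split; [intros w w' Hw Hww' p Hp; apply (proj1 (proj2 (proj2 (H1 p Hp))) w); auto|].
      split; [intros p Hp; apply H1; auto|].
      intros w Hw Cw. destruct (H2 w Cw) as [p [Hp Hpw]].
      apply (proj2 (proj2 (proj2 (proj2 (H1 p Hp)))) w); auto.
Qed.

Definition saturation (N : T -> Prop) : T -> Prop := fun z => exists n, N n /\ sim_rel z n.

Lemma saturation_saturated N : saturated (saturation N).
Proof.
  intros z w [n [Nn Hz]] Hzw. exists n; split; auto.
  apply (sim_trans w z n); auto. apply sim_sym; auto.
Qed.

Lemma saturation_open N : tT N -> tT (saturation N).
Proof.
  intros tN. apply open_local; [apply T_topology|]. intros z [n [Nn Rzn]].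
  destruct (compact_regular T tT T_topology T_compact T_hausdorff n N tN Nn)
    as [M [Q [tM [tQ [Mn [HQ D]]]]]].
  destruct (ent_point T tT T_topology T_hausdorff n M tM Mn) as [U [HU HUM]].
  destruct (near_identity_orbit_closure U z HU) as [A [tA [Az HA]]].
  exists A; split; auto; split; auto. intros z' Az'.
  apply NNPP; intros Hn.
  destruct (saturated_separation_closed (fun w => ~ Q w) z') as [B [tB [sB [Bz' DB]]]].
  - eapply open_ext; [exact tQ|]. intros; split; [auto|apply NNPP].
  - intros c nQc Rcz'. apply Hn. exists c; split.
    + apply NNPP; intros nN; apply nQc; auto.
    + apply sim_sym; auto.
  - destruct (HA z' Az' B tB Bz') as [g [Bgz Hg]].
    apply (DB (act g n)).
    + apply (sB (act g z)); auto. apply sim_act; auto.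
    + intros Qgn. apply (D (act g n)); auto.
Qed.

Definition topQ : topology (quot sim_rel) := quot_top tT sim_rel.

Lemma exist_eq (S1 S2 : T -> Prop) p1 p2 : S1 = S2 ->
  exist (fun S => exists x, S = sim_rel x) S1 p1 = exist (fun S => exists x, S = sim_rel x) S2 p2.
Proof. intros ->. f_equal. apply proof_irrelevance. Qed.

Lemma cls_eq x y : cls sim_rel x = cls sim_rel y <-> sim_rel x y.
Proof.
  split.
  - intros H. apply (f_equal (@proj1_sig _ _)) in H. simpl in H.
    rewrite H. apply sim_refl.
  - intros H. unfold cls. apply exist_eq. apply pred_ext. intros z; split; intros Hz.
    + apply (sim_trans y x z); auto. apply sim_sym; auto.
    + apply (sim_trans x y z); auto.
Qed.

Lemma cls_surj (q : quot sim_rel) : exists x, q = cls sim_rel x.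
Proof. destruct q as [S [x HS]]. exists x. unfold cls. apply exist_eq; auto. Qed.

Definition rep (q : quot sim_rel) : T :=
  proj1_sig (constructive_indefinite_description _ (cls_surj q)).

Lemma cls_rep q : q = cls sim_rel (rep q).
Proof. unfold rep. destruct (constructive_indefinite_description _ _); auto. Qed.

Lemma rep_cls x : sim_rel (rep (cls sim_rel x)) x.
Proof. apply cls_eq. rewrite <- cls_rep. auto. Qed.

(* The induced action g[θ] = [gθ], well defined since ~ is G-invariant. *)
Definition actQ (g : G) (q : quot sim_rel) : quot sim_rel := cls sim_rel (act g (rep q)).

Lemma actQ_cls g x : actQ g (cls sim_rel x) = cls sim_rel (act g x).
Proof. unfold actQ. apply cls_eq. apply sim_act, rep_cls. Qed.

(* The induced semicocycle f~([gθ0]) = f(gθ0); it is well defined because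
   F(gθ0) = {f(gθ0)} and ~ preserves F.  Off the orbit its value is
   irrelevant. *)
Definition ft (q : quot sim_rel) : K :=
  match excluded_middle_informative (exists g, q = cls sim_rel (act g theta0)) with
  | left H => f (act (proj1_sig (constructive_indefinite_description _ H)) theta0)
  | right _ => f (rep q)
  end.

Lemma ft_cls g : ft (cls sim_rel (act g theta0)) = f (act g theta0).
Proof.
  unfold ft. destruct excluded_middle_informative as [H|H]; [|exfalso; eauto].
  destruct constructive_indefinite_description as [g' Hg']. simpl.
  apply cls_eq in Hg'. pose proof (F_orbit g) as H1. rewrite (sim_F _ _ _ Hg') in H1.
  symmetry; apply F_orbit_eq; auto.
Qed.

Lemma ft_orbit g : ft (actQ g (cls sim_rel theta0)) = f (act g theta0).
Proof. rewrite actQ_cls; apply ft_cls. Qed.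

Definition img (A : T -> Prop) : quot sim_rel -> Prop :=
  fun q => exists x, q = cls sim_rel x /\ A x.

Lemma img_cls A x : saturated A -> (img A (cls sim_rel x) <-> A x).
Proof.
  intros sA; split.
  - intros [y [Hy Ay]]. apply cls_eq in Hy. apply (sA y); auto. apply sim_sym; auto.
  - intros Ax; exists x; auto.
Qed.

Lemma img_open A : tT A -> saturated A -> topQ (img A).
Proof.
  intros tA sA. unfold topQ, quot_top. eapply open_ext; [exact tA|].
  intros x; rewrite img_cls; tauto.
Qed.

Lemma img_saturation_open N : tT N -> topQ (img (saturation N)).
Proof. intros tN. apply img_open; [apply saturation_open; auto|apply saturation_saturated]. Qed.

Lemma img_saturation_cls N x : N x -> img (saturation N) (cls sim_rel x).
Proof. intros Nx. exists x; split; auto. exists x; split; auto. apply sim_refl. Qed.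

Lemma preimage_saturated (V : quot sim_rel -> Prop) : saturated (fun x => V (cls sim_rel x)).
Proof. intros z w Hz Hzw. apply cls_eq in Hzw. rewrite <- Hzw; auto. Qed.

Lemma cls_cont : continuous tT topQ (cls sim_rel).
Proof. intros V HV; exact HV. Qed.

(* The quotient topology is a compact Hausdorff topology; Hausdorffness
   is the saturated separation of classes. *)
Lemma topQ_topology : is_topology topQ.
Proof.
  unfold topQ, quot_top. split; [|split].
  - apply open_True, T_topology.
  - intros U V HU HV. apply open_inter; auto. apply T_topology.
  - intros C HC. apply (open_fex T tT T_topology (quot sim_rel -> Prop) C (fun U x => U (cls sim_rel x))). auto.
Qed.

Lemma topQ_compact : compact topQ.
Proof.
  intros C HC Hcov.
  destruct (compact_subcover T tT T_topology T_compact (quot sim_rel -> Prop) C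
    (fun U x => U (cls sim_rel x))) as [li [H1 H2]].
  - auto.
  - intros x. destruct (Hcov (cls sim_rel x)) as [U [CU Ux]]. eauto.
  - exists li; split; auto. intros q. rewrite (cls_rep q).
    destruct (H2 (rep q)) as [U [HU Ux]]. eauto.
Qed.

Lemma topQ_hausdorff : hausdorff topQ.
Proof.
  intros q1 q2 Hne. rewrite (cls_rep q1), (cls_rep q2) in *.
  assert (nR : ~ sim_rel (rep q1) (rep q2)) by (intros H; apply Hne, cls_eq; auto).
  destruct (saturated_separation _ _ nR) as [A [B [tA [tB [sA [sB [Ax [By D]]]]]]]].
  exists (img A), (img B). split; [apply img_open; auto|]. split; [apply img_open; auto|].
  split; [apply img_cls; auto|]. split; [apply img_cls; auto|].
  intros z Hz1 Hz2. rewrite (cls_rep z) in Hz1, Hz2. rewrite img_cls in Hz1, Hz2; auto. eauto.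
Qed.

Lemma actQ_action : is_action e mul actQ.
Proof.
  split.
  - intros q. rewrite (cls_rep q), actQ_cls, act_e; auto.
  - intros g h q. rewrite (cls_rep q), !actQ_cls, act_mul; auto.
Qed.

(* Joint continuity of the induced action: near (g, [t]) use a product of
   an orbit neighbourhood in G and the image of a saturated neighbourhood,
   controlled by equicontinuity. *)
Lemma actQ_cont : continuous (prod_top tG topQ) topQ (fun p => actQ (fst p) (snd p)).
Proof.
  intros V HV [g q] Hp. simpl in Hp. rewrite (cls_rep q) in *. set (t := rep q) in *.
  rewrite actQ_cls in Hp.
  destruct (ent_point T tT T_topology T_hausdorff (act g t) (fun x => V (cls sim_rel x)) HV Hp)
    as [E [HE HEV]].
  destruct (ent_half T tT T_topology T_compact T_hausdorff E HE) as [E' [HE' [Es CE]]].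
  destruct (Heq E' HE') as [U [HU HUE]].
  destruct (ent_nbhd T tT T_topology E' (act g t) HE') as [N4 [tN4 [N4g HN4]]].
  destruct (ent_nbhd T tT T_topology U t HU) as [N [tN [Nt HN]]].
  exists (fun h => N4 (act h t)), (img (saturation N)).
  split; [apply orbit_cont; auto|]. split; [apply img_saturation_open; auto|].
  split; [simpl; auto|]. split; [apply img_saturation_cls; auto|].
  intros h q' Hh [s [-> [n [Nn Rsn]]]]. simpl. rewrite actQ_cls.
  apply (preimage_saturated V (act h n)); [|apply sim_act, sim_sym; auto].
  apply HEV. apply (CE _ (act h t)); [apply HN4; auto|]. apply HUE; auto.
Qed.

Lemma actQ_minimal : minimal topQ actQ.
Proof.
  intros q q' U tU Uq'. rewrite (cls_rep q), (cls_rep q') in *.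
  destruct (Hmin (rep q) (rep q') (fun x => U (cls sim_rel x)) tU Uq') as [y [Uy [g ->]]].
  exists (cls sim_rel (act g (rep q))); split; auto. exists g. rewrite actQ_cls; auto.
Qed.

Lemma actQ_tds : is_tds tG e mul topQ actQ.
Proof.
  split; [apply topQ_topology|]. split; [apply topQ_compact|].
  split; [apply topQ_hausdorff|]. split; [apply actQ_action|apply actQ_cont].
Qed.

Definition small_pairs (U0 : T * T -> Prop) (p : quot sim_rel * quot sim_rel) : Prop :=
  exists N, tT N /\ (forall y z, N y -> N z -> U0 (y, z)) /\
    img (saturation N) (fst p) /\ img (saturation N) (snd p).

Lemma small_pairs_entourage U0 : entT U0 -> entourage topQ (small_pairs U0).
Proof.
  intros HU0. exists (small_pairs U0). split; [|split; auto].
  - intros p [N [tN [HN [H1 H2]]]].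
    exists (img (saturation N)), (img (saturation N)).
    repeat split; try apply img_saturation_open; auto. intros a b Ha Hb. exists N; auto.
  - intros q. rewrite (cls_rep q).
    destruct (ent_nbhd T tT T_topology U0 (rep q) HU0) as [N [tN [Nt HN]]].
    exists N; repeat split; auto; apply img_saturation_cls; auto.
Qed.

Lemma actQ_equicontinuous : equicontinuous topQ actQ.
Proof.
  intros V [W [HW [Hd HWV]]].
  assert (HW' : entT (fun p => W (cls sim_rel (fst p), cls sim_rel (snd p)))).
  { exists (fun p => W (cls sim_rel (fst p), cls sim_rel (snd p))); split; [|split; auto].
    apply (prod_pull T T _ _ tT tT topQ topQ _ _ W cls_cont cls_cont HW). }
  destruct (Heq _ HW') as [U0 [HU0 HU0W]].
  exists (small_pairs U0). split; [apply small_pairs_entourage; auto|].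
  intros h q1 q2 [N [tN [HN [H1 H2]]]]. simpl in H1, H2.
  destruct H1 as [x [-> [n1 [N1 R1]]]], H2 as [y [-> [n2 [N2 R2]]]].
  apply HWV. rewrite !actQ_cls.
  rewrite (proj2 (cls_eq (act h x) (act h n1)) (sim_act h _ _ R1)).
  rewrite (proj2 (cls_eq (act h y) (act h n2)) (sim_act h _ _ R2)).
  apply (HU0W h n1 n2). apply HN; auto.
Qed.

Lemma ft_graph x k : Fgraph topQ tK actQ (cls sim_rel theta0) ft (cls sim_rel x, k) <-> F x k.
Proof.
  split.
  - intros H. rewrite F_box. intros A B tA tB Ax Bk.
    destruct (H (fun p => img (saturation A) (fst p) /\ B (snd p))) as
      [p [[Hp1 Hp2] [[g Hg] Hf]]].
    + apply box_open; auto. apply img_saturation_open; auto.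
    + simpl; split; auto. apply img_saturation_cls; auto.
    + rewrite Hg, actQ_cls in Hp1, Hf. rewrite Hf, ft_cls in Hp2.
      rewrite img_cls in Hp1; [|apply saturation_saturated]. destruct Hp1 as [a [Aa Ra]].
      pose proof (F_orbit g) as Fa. rewrite (sim_F _ _ _ Ra), F_box in Fa. apply Fa; auto.
  - intros H W HW Wp.
    destruct (HW _ Wp) as [Aq [B [h1 [h2 [h3 [h4 h5]]]]]]. simpl in *.
    rewrite F_box in H. destruct (H (fun z => Aq (cls sim_rel z)) B h1 h2 h3 h4) as [g [Ag Bg]].
    exists (cls sim_rel (act g theta0), f (act g theta0)). split; [apply h5; auto|].
    simpl; split; [exists g; rewrite actQ_cls; auto|rewrite ft_cls; auto].
Qed.

Lemma ellis_quotient xi : ellis tT act xi -> exists zeta, ellis topQ actQ zeta /\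
  forall x, zeta (cls sim_rel x) = cls sim_rel (xi x).
Proof.
  intros Hxi. exists (fun q => cls sim_rel (xi (rep q))). split.
  - intros l Hl.
    destruct (Hxi (map (fun p => (rep (fst p), fun z => snd p (cls sim_rel z))) l)) as [g Hg].
    + intros p Hp. apply in_map_iff in Hp. destruct Hp as [q [<- Hq]]. simpl. apply Hl; auto.
    + exists g. intros p Hp. apply (Hg (rep (fst p), fun z => snd p (cls sim_rel z))).
      apply in_map_iff; exists p; auto.
  - intros x. apply cls_eq. apply sim_ellis; auto. apply rep_cls.
Qed.

(* f~ is invariant under no rotation: ~ computed for f~ on T/~ pulls
   back, via the lifted Ellis elements, to ~ itself. *)
Lemma ft_no_rotation : no_rotation topQ tK actQ (cls sim_rel theta0) ft.
Proof.
  intros q1 q2 H. rewrite (cls_rep q1), (cls_rep q2) in *. apply cls_eq.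
  intros xi Hxi k. destruct (ellis_quotient xi Hxi) as [zeta [Hz Hzx]].
  specialize (H zeta Hz k). rewrite !Hzx, !ft_graph in H. exact H.
Qed.

(* Continuity of f~ on the orbit of [θ0]: the preimage of an open V is the
   trace of the saturated open set of points all of whose fibres lie in V
   locally. *)
Lemma ft_semicocycle : semicocycle topQ tK actQ (cls sim_rel theta0) ft.
Proof.
  split; [apply actQ_minimal|].
  intros V tV.
  set (U' := fun x => exists B, tT B /\ saturated B /\ B x /\ forall z, B z -> forall k, F z k -> V k).
  assert (tU' : tT U').
  { apply open_local; [apply T_topology|]. intros x [B [tB [sB [Bx HB]]]].
    exists B; split; auto; split; auto. intros y By. exists B; auto. }
  assert (sU' : saturated U').
  { intros z w [B [tB [sB [Bz HB]]]] Hzw. exists B; repeat split; auto. apply (sB z); auto. }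
  exists (img U'). split; [apply img_open; auto|].
  intros y [g ->]. rewrite ft_orbit, actQ_cls, img_cls; auto. split.
  - intros Vf. destruct (compact_regular K tK HtK HcK HhK _ V tV Vf)
      as [O' [Q' [tO' [tQ' [O'f [HQ' D]]]]]].
    destruct (f_cont O' tO') as [U0 [tU0 HU0]].
    exists (saturation U0). split; [apply saturation_open; auto|].
    split; [apply saturation_saturated|].
    split; [exists (act g theta0); split; [apply HU0; auto|apply sim_refl]|].
    intros z [n [U0n Rzn]] k Fk. rewrite (sim_F _ _ _ Rzn) in Fk.
    apply NNPP; intros nV. apply (F_avoids O' Q' U0 tQ' D tU0) with (u := n) (k := k); auto.
    intros g' Hg'. apply HU0; auto.
  - intros [B [tB [sB [Bx HB]]]]. apply (HB _ Bx). apply F_orbit.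
Qed.

(* f~ and f agree along the orbits, so they generate the same subshift. *)
Lemma Xf_quotient x : Xf mul tK actQ (cls sim_rel theta0) ft x <-> Xf mul tK act theta0 f x.
Proof.
  unfold Xf; split; intros H l Hl; destruct (H l Hl) as [h Hh]; exists h;
    intros p Hp; specialize (Hh p Hp); rewrite ?ft_orbit in *; auto.
Qed.

End Semicocycle.
End System.

Theorem mainTheorem6 :
  forall (G : Type) (tG : topology G) (e : G) (mul : G -> G -> G) (inv : G -> G)
         (T : Type) (tT : topology T) (act : G -> T -> T)
         (K : Type) (tK : topology K) (theta0 : T) (f : T -> K),
  is_topgroup tG e mul inv ->
  is_tds tG e mul tT act -> minimal tT act -> equicontinuous tT act ->
  is_topology tK -> compact tK -> hausdorff tK ->
  semicocycle tT tK act theta0 f ->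
  let R := sim tT tK act theta0 f in
  exists actQ : G -> quot R -> quot R,
    (forall g t, actQ g (cls R t) = cls R (act g t)) /\
    is_tds tG e mul (quot_top tT R) actQ /\
    minimal (quot_top tT R) actQ /\ equicontinuous (quot_top tT R) actQ /\
    pointed (quot_top tT R) actQ (cls R theta0) /\
    (exists ft : quot R -> K,
       (forall g, ft (actQ g (cls R theta0)) = f (act g theta0)) /\
       semicocycle (quot_top tT R) tK actQ (cls R theta0) ft /\
       no_rotation (quot_top tT R) tK actQ (cls R theta0) ft /\
       (forall x, Xf mul tK actQ (cls R theta0) ft x <-> Xf mul tK act theta0 f x)) /\
    semicocycle_extension tG e mul (quot_top tT R) actQ tK (Xf mul tK act theta0 f).
Proof.
  intros G tG e mul inv T tT act K tK theta0 f HG Htds Hmin Heq HtK HcK HhK Hsc R.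
  set (q := actQ G T tT act K tK theta0 f).
  set (fq := ft G T tT act K tK theta0 f).
  assert (Hq_tds : is_tds tG e mul (quot_top tT R) q) by (eapply actQ_tds; eauto).
  assert (Hq_min : minimal (quot_top tT R) q) by (eapply actQ_minimal; eauto).
  assert (Hq_equi : equicontinuous (quot_top tT R) q) by (eapply actQ_equicontinuous; eauto).
  assert (Hfq : semicocycle (quot_top tT R) tK q (cls R theta0) fq)
    by (eapply ft_semicocycle; eauto).
  assert (Hfq_rot : no_rotation (quot_top tT R) tK q (cls R theta0) fq)
    by (eapply ft_no_rotation; eauto).
  assert (HX : forall x, Xf mul tK q (cls R theta0) fq x <-> Xf mul tK act theta0 f x)
    by (intros; eapply Xf_quotient; eauto).
  exists q. split; [intros; eapply actQ_cls; eauto|].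
  split; [exact Hq_tds|]. split; [exact Hq_min|]. split; [exact Hq_equi|].
  split; [exact (Hq_min (cls R theta0))|].
  split.
  - exists fq. split; [intros; eapply ft_orbit; eauto|auto].
  - split; [exact Hq_tds|]. split; [exact Hq_min|]. split; [exact Hq_equi|].
    exists (cls R theta0), fq. split; [exact Hfq|]. split; [exact Hfq_rot|].
    intros x; symmetry; apply HX.
Qed.
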